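(* Let $\Omega\subset\mathbb{R}^2$ be a compact convex set with nonempty interior $\Omega^\circ$, let $P\subset\Omega^\circ$ be a finite set, and let $f=G_P\mathbf{0}_\Omega$. Then every connected component of $\Omega^\circ\setminus C(f)$ whose closure does not intersect $\partial\Omega$ contains a point of $P$ in its closure.
   Context: An $\Omega$-tropical series is a function $f:\Omega\to\mathbb{R}$ such that $f\ge 0$ on $\Omega$, $f=0$ on $\partial\Omega$, and there exist coefficients $c_{ij}\in\mathbb{R}\cup\{+\infty\}$, $(i,j)\in\mathbb{Z}^2$, such that for all $(x,y)\in\Omega^\circ$, $f(x,y)=\min\{c_{ij}+ix+jy : (i,j)\in\mathbb{Z}^2\}$. Let $V(\Omega)$ denote the set of all $\Omega$-tropical series. For $f\in V(\Omega)$, the $\Omega$-tropical curve $C(f)$ is the set of points of $\Omega^\circ$ at which $f$ is not smooth (the corner locus). For a finite set $P\subset\Omega^\circ$ and $f\in V(\Omega)$, define $G_Pf(x,y)=\min\{g(x,y) : g\in V(\Omega),\ g\ge f,\ P\subset C(g)\}$ (pointwise). $\mathbf{0}_\Omega$ denotes the identically zero function on $\Omega$ (an $\Omega$-tropical series). *)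

From Stdlib Require Import Reals ZArith List.
Open Scope R_scope.

Definition pt := (R * R)%type.
Definition pset := pt -> Prop.

Definition pl_ball (p : pt) (r : R) : pset :=
  fun q => (fst q - fst p)^2 + (snd q - snd p)^2 < r^2.

Definition pl_is_open (U : pset) : Prop :=
  forall p, U p -> exists r, 0 < r /\ forall q, pl_ball p r q -> U q.

Definition pl_interior (S : pset) : pset :=
  fun p => exists r, 0 < r /\ forall q, pl_ball p r q -> S q.

Definition pl_closure (S : pset) : pset :=
  fun p => forall r, 0 < r -> exists q, pl_ball p r q /\ S q.

Definition pl_boundary (S : pset) : pset :=
  fun p => pl_closure S p /\ ~ pl_interior S p.

Definition pl_compact (S : pset) : Prop :=
  forall (I : Type) (U : I -> pset),
    (forall i, pl_is_open (U i)) ->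
    (forall p, S p -> exists i, U i p) ->
    exists l : list I, forall p, S p -> exists i, In i l /\ U i p.

Definition convex (S : pset) : Prop :=
  forall p q t, S p -> S q -> 0 <= t <= 1 ->
    S (t * fst p + (1 - t) * fst q, t * snd p + (1 - t) * snd q).

Definition pl_connected (S : pset) : Prop :=
  ~ exists U V : pset, pl_is_open U /\ pl_is_open V /\
      (forall p, S p -> U p \/ V p) /\
      (exists p, S p /\ U p) /\ (exists p, S p /\ V p) /\
      (forall p, S p -> U p -> V p -> False).

Definition pl_component (A : pset) (x : pt) : pset :=
  fun y => exists S : pset, pl_connected S /\ (forall z, S z -> A z) /\ S x /\ S y.

Definition is_component (A : pset) (K : pset) : Prop :=
  exists x, A x /\ forall y, K y <-> pl_component A x y.

Definition smooth_at (Omega : pset) (f : pt -> R) (p : pt) : Prop :=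
  exists r a b c, 0 < r /\
    forall q, pl_ball p r q -> Omega q -> f q = a + b * fst q + c * snd q.

(* Coefficients: None stands for +infinity *)
Definition is_tropical_series (Omega : pset) (f : pt -> R) : Prop :=
  (forall p, Omega p -> 0 <= f p) /\
  (forall p, pl_boundary Omega p -> f p = 0) /\
  exists c : Z -> Z -> option R,
    forall p, pl_interior Omega p ->
      (exists i j v, c i j = Some v /\
          f p = v + IZR i * fst p + IZR j * snd p) /\
      (forall i j v, c i j = Some v ->
          f p <= v + IZR i * fst p + IZR j * snd p).

Definition trop_curve (Omega : pset) (f : pt -> R) : pset :=
  fun p => pl_interior Omega p /\ ~ smooth_at Omega f p.

Definition is_GP (Omega : pset) (P : list pt) (f h : pt -> R) : Prop :=
  forall p, Omega p ->
    (exists g, is_tropical_series Omega g /\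
       (forall q, Omega q -> f q <= g q) /\
       (forall q, In q P -> trop_curve Omega g q) /\ g p = h p) /\
    (forall g, is_tropical_series Omega g ->
       (forall q, Omega q -> f q <= g q) ->
       (forall q, In q P -> trop_curve Omega g q) -> h p <= g p).

Definition zero_fun : pt -> R := fun _ => 0.

(** Let [f = G_P 0] and let [K] be the component of a point [x0] of the complement of
    the curve [C(f)].  Assume that the closure of [K] avoids both [P] and [dOmega].
    Near [x0] the function [f] is a monomial [m] which, being the active monomial of a
    competitor, lies above [f] on the whole interior.  Since [f] is concave (a minimum of
    concave competitors), any point [q] at which [m <= f] (for [q] interior), or at which
    [m <= 0] (for [q] in [Omega], using [f >= 0]), forces [f = m] on the open cone from a
    disc around [x0] to [q]; the cone is connected and misses [C(f)], so [q] lies in the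
    closure of [K].  Hence [f < m] on [P], and [m] is positive on the compact set
    [Omega], say [m >= eps > 0].  Taking a competitor [G] with [G = f] on [P] and a small
    [e > 0], the function [min(G, m - e)] is again a competitor, and at [x0] it is
    [< f(x0)], contradicting the minimality of [f]. *)

From Stdlib Require Import Reals List Lra Psatz Classical ClassicalEpsilon.
Open Scope R_scope.

(** * Discs, segments and affine functions in the plane *)

Lemma ball_center p r : 0 < r -> pl_ball p r p.
Proof. unfold pl_ball; intros; nra. Qed.

Lemma ball_mono x r r' w : pl_ball x r w -> 0 < r -> r <= r' -> pl_ball x r' w.
Proof. unfold pl_ball; intros; nra. Qed.

Lemma ball_coord p r q : 0 < r -> pl_ball p r q ->
  Rabs (fst q - fst p) < r /\ Rabs (snd q - snd p) < r.
Proof.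
  unfold pl_ball; intros Hr H.
  pose proof (pow2_ge_0 (fst q - fst p)); pose proof (pow2_ge_0 (snd q - snd p)).
  split; apply Rabs_def1; nra.
Qed.

Lemma ball_tri x z w s t : 0 < s -> 0 < t ->
  pl_ball z s w -> pl_ball x t z -> pl_ball x (s + t) w.
Proof.
  unfold pl_ball; intros Hs Ht H1 H2.
  set (u1 := fst w - fst z) in *. set (u2 := snd w - snd z) in *.
  set (v1 := fst z - fst x) in *. set (v2 := snd z - snd x) in *.
  replace (fst w - fst x) with (u1 + v1) by (unfold u1, v1; ring).
  replace (snd w - snd x) with (u2 + v2) by (unfold u2, v2; ring).
  assert (Hcs : (u1 * v1 + u2 * v2) ^ 2 <= (u1 ^ 2 + u2 ^ 2) * (v1 ^ 2 + v2 ^ 2))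
    by (pose proof (pow2_ge_0 (u1 * v2 - u2 * v1)); nra).
  assert (Hprod : (u1 ^ 2 + u2 ^ 2) * (v1 ^ 2 + v2 ^ 2) < (s * t) ^ 2)
    by (pose proof (pow2_ge_0 u1); pose proof (pow2_ge_0 u2);
        pose proof (pow2_ge_0 v1); pose proof (pow2_ge_0 v2); nra).
  assert (u1 * v1 + u2 * v2 < s * t).
  { destruct (Rlt_or_le (u1 * v1 + u2 * v2) (s * t)) as [Hlt|Hge]; auto.
    assert (0 < s * t) by nra. nra. }
  lra.
Qed.

Lemma ball_open x r k : 0 < r -> pl_ball x r k ->
  exists rho, 0 < rho /\ forall w, pl_ball k rho w -> pl_ball x r w.
Proof.
  intros Hr Hk. unfold pl_ball in Hk.
  set (d2 := (fst k - fst x) ^ 2 + (snd k - snd x) ^ 2) in *.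
  assert (Hd2 : 0 <= d2)
    by (unfold d2; pose proof (pow2_ge_0 (fst k - fst x)); pose proof (pow2_ge_0 (snd k - snd x)); lra).
  set (d := sqrt d2).
  assert (Hdd : d * d = d2) by (apply sqrt_sqrt; auto).
  assert (Hd0 : 0 <= d) by apply sqrt_pos.
  assert (Hdr : d < r) by nra.
  exists ((r - d) / 2); split; [lra|]. intros w Hw.
  replace r with ((r - d) / 2 + (r + d) / 2) by field.
  apply ball_tri with k; try lra; auto.
  unfold pl_ball; fold d2; nra.
Qed.

Lemma interior_in (Om : pset) z : pl_interior Om z -> Om z.
Proof. intros [r [Hr H]]. apply H, ball_center; auto. Qed.

Lemma interior_open (Om : pset) z : pl_interior Om z ->
  exists r, 0 < r /\ forall w, pl_ball z r w -> pl_interior Om w.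
Proof.
  intros [r [Hr H]]. exists r; split; auto. intros w Hw.
  destruct (ball_open z r w Hr Hw) as [rho [Hrho Hsub]].
  exists rho; split; auto.
Qed.

Lemma closure_mono (S T : pset) q : (forall y, S y -> T y) ->
  pl_closure S q -> pl_closure T q.
Proof.
  intros HST H r Hr. destruct (H r Hr) as [y [Hy Sy]]. exists y; auto.
Qed.

Definition comb (a b : pt) (t : R) : pt :=
  ((1 - t) * fst a + t * fst b, (1 - t) * snd a + t * snd b).

Lemma comb0 a b : comb a b 0 = a.
Proof. destruct a; unfold comb; simpl; f_equal; ring. Qed.

Lemma comb1 a b : comb a b 1 = b.
Proof. destruct b; unfold comb; simpl; f_equal; ring. Qed.

Lemma comb_comb a b s u : comb a (comb a b s) u = comb a b (u * s).
Proof. destruct a, b; unfold comb; simpl; f_equal; ring. Qed.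

Lemma convex_comb (Om : pset) a b t : convex Om -> Om a -> Om b -> 0 <= t <= 1 ->
  Om (comb a b t).
Proof.
  intros Hc Ha Hb Ht.
  replace (comb a b t) with (t * fst b + (1 - t) * fst a, t * snd b + (1 - t) * snd a)
    by (unfold comb; f_equal; ring).
  apply Hc; auto.
Qed.

Lemma comb_ball_preimage a b t R w : 0 <= t < 1 -> 0 < R ->
  pl_ball (comb a b t) ((1 - t) * R) w ->
  exists a', pl_ball a R a' /\ w = comb a' b t.
Proof.
  intros Ht HR Hw.
  set (u := 1 - t). assert (Hu : 0 < u) by (unfold u; lra).
  set (z := comb a b t) in *.
  exists (fst a + (fst w - fst z) / u, snd a + (snd w - snd z) / u). split.
  - unfold pl_ball in *; cbn [fst snd]. fold u in Hw.
    replace ((fst a + (fst w - fst z) / u - fst a) ^ 2 + (snd a + (snd w - snd z) / u - snd a) ^ 2)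
      with (((fst w - fst z) ^ 2 + (snd w - snd z) ^ 2) / u ^ 2) by (field; lra).
    apply Rmult_lt_reg_r with (u ^ 2); [nra|].
    replace (((fst w - fst z) ^ 2 + (snd w - snd z) ^ 2) / u ^ 2 * u ^ 2)
      with ((fst w - fst z) ^ 2 + (snd w - snd z) ^ 2) by (field; lra).
    replace (R ^ 2 * u ^ 2) with ((u * R) ^ 2) by ring. exact Hw.
  - destruct w as [w1 w2]. unfold z, comb; simpl. fold u. f_equal; field; lra.
Qed.

Lemma comb_interior (Om : pset) a b t : convex Om -> pl_interior Om a -> Om b ->
  0 <= t < 1 -> pl_interior Om (comb a b t).
Proof.
  intros Hc [R [HR Ha]] Hb Ht.
  exists ((1 - t) * R); split; [nra|].
  intros w Hw. destruct (comb_ball_preimage a b t R w Ht HR Hw) as [a' [Ha' ->]].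
  apply convex_comb; auto. lra.
Qed.

Definition aff (a b c : R) (w : pt) : R := a + b * fst w + c * snd w.

Lemma aff_comb a b c x y t :
  aff a b c (comb x y t) = (1 - t) * aff a b c x + t * aff a b c y.
Proof. unfold aff, comb; cbn [fst snd]; ring. Qed.

Lemma aff_lower_bound_near a b c x e : e < aff a b c x ->
  exists rho, 0 < rho /\ forall w, pl_ball x rho w -> e < aff a b c w.
Proof.
  intros He.
  set (K := Rabs b + Rabs c + 1).
  assert (HK : 0 < K) by (unfold K; pose proof (Rabs_pos b); pose proof (Rabs_pos c); lra).
  set (rho := (aff a b c x - e) / K).
  assert (Hrho : 0 < rho) by (apply Rdiv_lt_0_compat; lra).
  assert (HrhoK : rho * K = aff a b c x - e) by (unfold rho; field; lra).
  exists rho; split; auto. intros w Hw.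
  destruct (ball_coord _ _ _ Hrho Hw) as [H1 H2].
  assert (Hdiff : Rabs (aff a b c w - aff a b c x) < aff a b c x - e).
  { rewrite <- HrhoK. unfold K, aff.
    replace (a + b * fst w + c * snd w - (a + b * fst x + c * snd x))
      with (b * (fst w - fst x) + c * (snd w - snd x)) by ring.
    eapply Rle_lt_trans; [apply Rabs_triang|]. rewrite !Rabs_mult.
    pose proof (Rabs_pos b); pose proof (Rabs_pos c).
    assert (Rabs b * Rabs (fst w - fst x) <= Rabs b * rho) by (apply Rmult_le_compat_l; lra).
    assert (Rabs c * Rabs (snd w - snd x) <= Rabs c * rho) by (apply Rmult_le_compat_l; lra).
    nra. }
  apply Rabs_def2 in Hdiff. lra.
Qed.

Lemma affine_touching_eq q rho a1 b1 c1 a2 b2 c2 : 0 < rho ->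
  (forall w, pl_ball q rho w -> aff a2 b2 c2 w <= aff a1 b1 c1 w) ->
  aff a1 b1 c1 q = aff a2 b2 c2 q ->
  forall w, aff a1 b1 c1 w = aff a2 b2 c2 w.
Proof.
  intros Hr H Hq.
  assert (Hshift : forall d1 d2, d1 ^ 2 + d2 ^ 2 < rho ^ 2 ->
                   aff a2 b2 c2 (fst q + d1, snd q + d2) <= aff a1 b1 c1 (fst q + d1, snd q + d2)).
  { intros d1 d2 Hd. apply H. unfold pl_ball; cbn [fst snd].
    replace (fst q + d1 - fst q) with d1 by ring. replace (snd q + d2 - snd q) with d2 by ring.
    auto. }
  set (h := rho / 2).
  pose proof (Hshift h 0 ltac:(unfold h; nra)) as E1.
  pose proof (Hshift (- h) 0 ltac:(unfold h; nra)) as E2.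
  pose proof (Hshift 0 h ltac:(unfold h; nra)) as E3.
  pose proof (Hshift 0 (- h) ltac:(unfold h; nra)) as E4.
  unfold aff in *; cbn [fst snd] in *.
  assert (Hh : 0 < h) by (unfold h; lra).
  assert (b1 = b2) by nra. assert (c1 = c2) by nra. subst.
  intros w. lra.
Qed.

(** * Connectedness *)

Lemma star_connected (S : pset) c : S c ->
  (forall z, S z -> exists T : pset, pl_connected T /\ (forall w, T w -> S w) /\ T c /\ T z) ->
  pl_connected S.
Proof.
  intros Sc H [U [V [HU [HV [Hcov [[u [Su Uu]] [[v [Sv Vv]] Hdis]]]]]]].
  assert (Hsplit : forall T : pset, (forall w, T w -> S w) ->
            (exists p, T p /\ U p) -> (exists p, T p /\ V p) -> ~ pl_connected T).
  { intros T TS HTU HTV HT. apply HT. exists U, V.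
    split; [exact HU|]; split; [exact HV|].
    split; [intros p Tp; apply Hcov, TS, Tp|].
    split; [exact HTU|]; split; [exact HTV|].
    intros p Tp; apply Hdis, TS, Tp. }
  destruct (Hcov c Sc) as [Uc|Vc].
  - destruct (H v Sv) as [T [HT [TS [Tc Tv]]]].
    apply (Hsplit T TS); [exists c | exists v | ]; auto.
  - destruct (H u Su) as [T [HT [TS [Tc Tu]]]].
    apply (Hsplit T TS); [exists u | exists c | ]; auto.
Qed.

Lemma union_connected (T1 T2 : pset) p : pl_connected T1 -> pl_connected T2 ->
  T1 p -> T2 p -> pl_connected (fun w => T1 w \/ T2 w).
Proof.
  intros H1 H2 P1 P2. apply star_connected with p; [left; auto|].
  intros z [Hz|Hz]; [exists T1 | exists T2]; repeat split; auto.
Qed.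

(** The unit interval is connected: it cannot be split by two relatively open,
    disjoint, covering sets [pU] and [pV]. *)
Lemma interval_connected (pU pV : R -> Prop) s1 s2 :
  (forall s, 0 <= s <= 1 -> pU s \/ pV s) ->
  (forall s, 0 <= s <= 1 -> pU s -> pV s -> False) ->
  (forall s, pU s -> exists d, 0 < d /\ forall r, Rabs (r - s) < d -> pU r) ->
  (forall s, pV s -> exists d, 0 < d /\ forall r, Rabs (r - s) < d -> pV r) ->
  0 <= s1 <= 1 -> 0 <= s2 <= 1 -> pU s1 -> pV s2 -> s1 < s2 -> False.
Proof.
  intros Hcov Hdis HoU HoV Hs1 Hs2 U1 V2 Hlt.
  set (E := fun s => s1 <= s <= s2 /\ pU s).
  assert (Eb : bound E) by (exists s2; intros s [Hs _]; lra).
  assert (Es1 : E s1) by (split; [lra | auto]).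
  destruct (completeness E Eb (ex_intro _ s1 Es1)) as [sig [Hub Hlub]].
  assert (Hsig1 : s1 <= sig) by (apply Hub, Es1).
  assert (Hsig2 : sig <= s2) by (apply Hlub; intros s [Hs _]; lra).
  destruct (Hcov sig ltac:(lra)) as [Us|Vs].
  - (* [pU] extends beyond [sig]. *)
    destruct (Req_dec sig s2) as [<-|Hne]; [exact (Hdis sig ltac:(lra) Us V2)|].
    destruct (HoU sig Us) as [d [Hd HdU]].
    assert (Hs' : sig < Rmin (sig + d / 2) s2) by (apply Rmin_glb_lt; lra).
    pose proof (Rmin_l (sig + d / 2) s2). pose proof (Rmin_r (sig + d / 2) s2).
    set (s' := Rmin (sig + d / 2) s2) in *.
    assert (Es' : E s') by (split; [lra | apply HdU, Rabs_def1; lra]).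
    pose proof (Hub s' Es'). lra.
  - (* a neighbourhood of [sig] lies in [pV], so [sig - d/2] bounds [E]. *)
    destruct (Req_dec sig s1) as [->|Hne]; [exact (Hdis s1 ltac:(lra) U1 Vs)|].
    destruct (HoV sig Vs) as [d [Hd HdV]].
    assert (Hub' : is_upper_bound E (sig - d / 2)).
    { intros s [Hs Us]. destruct (Rle_or_lt s (sig - d / 2)) as [Hle|Hgt]; auto.
      exfalso. pose proof (Hub s (conj Hs Us)).
      apply (Hdis s); [lra | auto | apply HdV, Rabs_def1; lra]. }
    pose proof (Hlub _ Hub'). lra.
Qed.

Definition seg (a b : pt) : pset := fun w => exists s, 0 <= s <= 1 /\ w = comb a b s.

Lemma comb_continuous a b s rho : 0 < rho -> exists d, 0 < d /\
  forall r, Rabs (r - s) < d -> pl_ball (comb a b s) rho (comb a b r).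
Proof.
  intros Hr.
  set (D := (fst b - fst a) ^ 2 + (snd b - snd a) ^ 2).
  assert (HD : 0 <= D)
    by (unfold D; pose proof (pow2_ge_0 (fst b - fst a)); pose proof (pow2_ge_0 (snd b - snd a)); lra).
  set (d := rho / (D + 1)).
  assert (Hd : d * (D + 1) = rho) by (unfold d; field; lra).
  assert (Hd0 : 0 < d) by (unfold d; apply Rdiv_lt_0_compat; lra).
  exists d. split; auto. intros r Hrs. unfold pl_ball, comb; cbn [fst snd].
  replace (((1 - r) * fst a + r * fst b - ((1 - s) * fst a + s * fst b)) ^ 2 +
           ((1 - r) * snd a + r * snd b - ((1 - s) * snd a + s * snd b)) ^ 2)
    with ((r - s) ^ 2 * D) by (unfold D; ring).
  assert (Hsq : (r - s) ^ 2 <= d ^ 2)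
    by (rewrite <- pow2_abs; pose proof (Rabs_pos (r - s)); nra).
  assert ((r - s) ^ 2 * D <= d ^ 2 * D) by (apply Rmult_le_compat_r; auto).
  assert (d ^ 2 * D < d ^ 2 * (D + 1) ^ 2) by (apply Rmult_lt_compat_l; nra).
  rewrite <- Hd. nra.
Qed.

Lemma seg_connected a b : pl_connected (seg a b).
Proof.
  intros [U [V [HU [HV [Hcov [[u [[su [Hsu ->]] Uu]] [[v [[sv [Hsv ->]] Vv]] Hdis]]]]]]].
  set (pU := fun s => U (comb a b s)). set (pV := fun s => V (comb a b s)).
  assert (cov : forall s, 0 <= s <= 1 -> pU s \/ pV s)
    by (intros s Hs; apply Hcov; exists s; auto).
  assert (dis : forall s, 0 <= s <= 1 -> pU s -> pV s -> False)
    by (intros s Hs; apply Hdis; exists s; auto).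
  assert (Hpull : forall W : pset, pl_is_open W -> forall s, W (comb a b s) ->
            exists d, 0 < d /\ forall r, Rabs (r - s) < d -> W (comb a b r)).
  { intros W HW s Hs. destruct (HW _ Hs) as [rho [Hrho H]].
    destruct (comb_continuous a b s rho Hrho) as [d [Hd H']].
    exists d; split; auto. }
  destruct (Rtotal_order su sv) as [Hl|[<-|Hg]].
  - exact (interval_connected pU pV su sv cov dis (Hpull U HU) (Hpull V HV) Hsu Hsv Uu Vv Hl).
  - exact (dis su Hsu Uu Vv).
  - refine (interval_connected pV pU sv su _ _ (Hpull V HV) (Hpull U HU) Hsv Hsu Vv Uu Hg).
    + intros s Hs. destruct (cov s Hs); auto.
    + intros s Hs H1 H2. exact (dis s Hs H2 H1).
Qed.

Lemma seg_in_ball x0 r0 k : pl_ball x0 r0 k -> forall w, seg x0 k w -> pl_ball x0 r0 w.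
Proof.
  intros Hk w [s [Hs ->]]. unfold pl_ball, comb in *; cbn [fst snd].
  replace ((1 - s) * fst x0 + s * fst k - fst x0) with (s * (fst k - fst x0)) by ring.
  replace ((1 - s) * snd x0 + s * snd k - snd x0) with (s * (snd k - snd x0)) by ring.
  pose proof (pow2_ge_0 (fst k - fst x0)); pose proof (pow2_ge_0 (snd k - snd x0)).
  assert (s ^ 2 <= 1) by nra.
  nra.
Qed.

(** * Compactness *)

(** Positive reals, used to index open covers. *)
Definition posR := {e : R | 0 < e}.

Lemma list_min_pos (l : list posR) :
  exists eps, 0 < eps /\ forall i, In i l -> eps <= proj1_sig i.
Proof.
  induction l as [|i l [e [He Hl]]].
  - exists 1. split; [lra|]. intros i [].
  - exists (Rmin e (proj1_sig i)). split.
    + destruct i as [x Hx]; simpl. apply Rmin_glb_lt; auto.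
    + intros j [<-|Hj]; [apply Rmin_r|].
      eapply Rle_trans; [apply Rmin_l | apply Hl; auto].
Qed.

Lemma list_max_pos (l : list posR) :
  exists M, forall i, In i l -> proj1_sig i <= M.
Proof.
  induction l as [|i l [M HM]].
  - exists 0. intros i [].
  - exists (Rmax M (proj1_sig i)).
    intros j [<-|Hj]; [apply Rmax_r|].
    eapply Rle_trans; [apply HM; auto | apply Rmax_l].
Qed.

Lemma list_gap (L : list pt) (d : pt -> R) eps : 0 < eps ->
  (forall q, In q L -> 0 < d q) ->
  exists e, 0 < e /\ e <= eps /\ forall q, In q L -> e < d q.
Proof.
  intros Heps. induction L as [|q L IH]; intros HL.
  - exists eps. split; [auto | split; [lra | intros q []]].
  - destruct IH as [e [He [Hee HeL]]]; [intros q' Hq'; apply HL; right; auto|].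
    pose proof (HL q (or_introl eq_refl)).
    pose proof (Rmin_l e (d q / 2)). pose proof (Rmin_r e (d q / 2)).
    exists (Rmin e (d q / 2)). split; [apply Rmin_glb_lt; lra | split; [lra|]].
    intros q' [<-|Hq']; [lra|]. pose proof (HeL q' Hq'). lra.
Qed.

Lemma compact_pos_lower_bound (Om : pset) (h : pt -> R) : pl_compact Om ->
  (forall x e, e < h x -> exists rho, 0 < rho /\ forall w, pl_ball x rho w -> e < h w) ->
  (forall x, Om x -> 0 < h x) ->
  exists eps, 0 < eps /\ forall x, Om x -> eps <= h x.
Proof.
  intros Hc Hlsc Hpos.
  destruct (Hc posR (fun i x => proj1_sig i < h x)) as [l Hl].
  - intros i x Hx. exact (Hlsc x _ Hx).
  - intros x Hx. pose proof (Hpos x Hx).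
    exists (exist (fun e => 0 < e) (h x / 2) ltac:(lra)). simpl. lra.
  - destruct (list_min_pos l) as [eps [He Hle]]. exists eps; split; auto.
    intros x Hx. destruct (Hl x Hx) as [i [Hi Hix]]. pose proof (Hle i Hi). lra.
Qed.

Lemma compact_fst_bounded (Om : pset) : pl_compact Om ->
  exists M, forall x, Om x -> fst x <= M.
Proof.
  intros Hc.
  destruct (Hc posR (fun i x => fst x < proj1_sig i)) as [l Hl].
  - intros i x Hx. exists (proj1_sig i - fst x). split; [lra|].
    intros w Hw. destruct (ball_coord x (proj1_sig i - fst x) w ltac:(lra) Hw) as [Hw1 _].
    apply Rabs_def2 in Hw1. lra.
  - intros x _. pose proof (Rabs_pos (fst x)).
    exists (exist (fun e => 0 < e) (Rabs (fst x) + 1) ltac:(lra)). simpl.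
    pose proof (Rle_abs (fst x)). lra.
  - destruct (list_max_pos l) as [M HM]. exists M.
    intros x Hx. destruct (Hl x Hx) as [i [Hi Hix]]. pose proof (HM i Hi). lra.
Qed.

(** A nonempty compact set is not open: some of its points are not interior.  A point
    maximising the first coordinate cannot be interior. *)
Lemma compact_non_interior (Om : pset) x0 : pl_compact Om -> Om x0 ->
  exists y, Om y /\ ~ pl_interior Om y.
Proof.
  intros Hc Hx0. apply NNPP; intros Hno.
  assert (Hint : forall y, Om y -> pl_interior Om y)
    by (intros y Hy; apply NNPP; intros Hi; apply Hno; exists y; auto).
  set (E := fun s => exists x, Om x /\ s = fst x).
  assert (Eb : bound E).
  { destruct (compact_fst_bounded Om Hc) as [M HM].
    exists M. intros s [x [Hx ->]]. auto. }
  destruct (completeness E Eb (ex_intro _ (fst x0) (ex_intro _ x0 (conj Hx0 eq_refl))))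
    as [M [Hub Hlub]].
  assert (Hgap : forall x, Om x -> 0 < aff M (-1) 0 x).
  { intros x Hx. destruct (Hint x Hx) as [r [Hr Hball]].
    assert (Hshift : Om (fst x + r / 2, snd x)).
    { apply Hball. unfold pl_ball; cbn [fst snd]. nra. }
    pose proof (Hub _ (ex_intro _ _ (conj Hshift eq_refl))). unfold aff; cbn [fst snd] in *. lra. }
  destruct (compact_pos_lower_bound Om _ Hc (aff_lower_bound_near M (-1) 0) Hgap)
    as [eps [Heps Hle]].
  assert (HubM : is_upper_bound E (M - eps)).
  { intros s [x [Hx ->]]. pose proof (Hle x Hx). unfold aff in *. lra. }
  pose proof (Hlub _ HubM). lra.
Qed.

(** * Tropical series *)

(** The third clause of [is_tropical_series]: on the interior, [h] is the pointwise
    minimum of the monomials [v + i x + j y] with coefficients [c i j = Some v]. *)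
Definition has_formula (Om : pset) (h : pt -> R) : Prop :=
  exists c : Z -> Z -> option R,
    forall p, pl_interior Om p ->
      (exists i j v, c i j = Some v /\ h p = v + IZR i * fst p + IZR j * snd p) /\
      (forall i j v, c i j = Some v -> h p <= v + IZR i * fst p + IZR j * snd p).

Lemma formula_touching_monomial (Om : pset) h p : has_formula Om h -> pl_interior Om p ->
  exists v i j, h p = aff v (IZR i) (IZR j) p /\
    forall x, pl_interior Om x -> h x <= aff v (IZR i) (IZR j) x.
Proof.
  intros [c Hc] Hp. destruct (Hc p Hp) as [[i [j [v [E Hv]]]] _].
  exists v, i, j. split; [exact Hv|].
  intros x Hx. destruct (Hc x Hx) as [_ Hle]. exact (Hle i j v E).
Qed.

Lemma formula_ext (Om : pset) h h' : (forall p, pl_interior Om p -> h p = h' p) ->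
  has_formula Om h -> has_formula Om h'.
Proof.
  intros Heq [c H]. exists c. intros p Hp. rewrite <- (Heq p Hp). apply H; auto.
Qed.

(** A single monomial is a tropical series (all other coefficients are [+oo]). *)
Lemma formula_monomial (Om : pset) v i0 j0 : has_formula Om (aff v (IZR i0) (IZR j0)).
Proof.
  exists (fun i j => if (Z.eqb i i0 && Z.eqb j j0)%bool then Some v else None).
  intros p Hp. split.
  - exists i0, j0, v. rewrite !Z.eqb_refl. simpl. split; auto.
  - intros i j w E.
    destruct (Z.eqb i i0) eqn:Ei; destruct (Z.eqb j j0) eqn:Ej; simpl in E; try discriminate.
    apply Z.eqb_eq in Ei. apply Z.eqb_eq in Ej. subst. inversion E; subst.
    unfold aff; lra.
Qed.

Definition ocmin (o1 o2 : option R) : option R :=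
  match o1, o2 with
  | Some a, Some b => Some (Rmin a b)
  | Some a, None => Some a
  | None, o => o
  end.

Lemma ocmin_cases o1 o2 w : ocmin o1 o2 = Some w -> o1 = Some w \/ o2 = Some w.
Proof.
  destruct o1 as [a|], o2 as [b|]; simpl; intros E; inversion E; subst; auto.
  destruct (Rle_dec a b); [left; rewrite Rmin_left | right; rewrite Rmin_right]; auto; lra.
Qed.

Lemma ocmin_left a o : (forall b, o = Some b -> a <= b) -> ocmin (Some a) o = Some a.
Proof. destruct o as [b|]; simpl; intros H; auto. rewrite Rmin_left; auto. Qed.

Lemma ocmin_right o b : (forall a, o = Some a -> b <= a) -> ocmin o (Some b) = Some b.
Proof. destruct o as [a|]; simpl; intros H; auto. rewrite Rmin_right; auto. Qed.

Lemma formula_min (Om : pset) h1 h2 : has_formula Om h1 -> has_formula Om h2 ->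
  has_formula Om (fun x => Rmin (h1 x) (h2 x)).
Proof.
  intros [c1 H1] [c2 H2].
  exists (fun i j => ocmin (c1 i j) (c2 i j)). intros p Hp.
  destruct (H1 p Hp) as [[i1 [j1 [v1 [E1 F1]]]] B1].
  destruct (H2 p Hp) as [[i2 [j2 [v2 [E2 F2]]]] B2].
  pose proof (Rmin_l (h1 p) (h2 p)). pose proof (Rmin_r (h1 p) (h2 p)).
  split.
  - destruct (Rle_dec (h1 p) (h2 p)) as [Hle|Hgt].
    + exists i1, j1, v1. rewrite E1, Rmin_left by auto. split; auto.
      apply ocmin_left. intros b Eb. pose proof (B2 _ _ _ Eb). lra.
    + exists i2, j2, v2. rewrite E2, Rmin_right by lra. split; auto.
      apply ocmin_right. intros a Ea. pose proof (B1 _ _ _ Ea). lra.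
  - intros i j w E. destruct (ocmin_cases _ _ _ E) as [Ea|Eb].
    + pose proof (B1 _ _ _ Ea). lra.
    + pose proof (B2 _ _ _ Eb). lra.
Qed.

(** A function below a tropical series [g], touching it at an interior point [q] where
    it is smooth, forces [g] to be smooth at [q]: near [q] the affine function is
    squeezed between [g] and the monomial of [g] active at [q]. *)
Lemma smooth_transfer (Om : pset) g h q : is_tropical_series Om g -> pl_interior Om q ->
  (forall w, pl_interior Om w -> h w <= g w) -> h q = g q ->
  smooth_at Om h q -> smooth_at Om g q.
Proof.
  intros [_ [_ Hg]] Hq Hhg Heq [r [a [b [c [Hr Hs]]]]].
  destruct (formula_touching_monomial Om g q Hg Hq) as [v [i [j [Hgq Hgle]]]].
  destruct (interior_open Om q Hq) as [r' [Hr' Hint]].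
  set (rho := Rmin r r').
  assert (Hrho : 0 < rho) by (apply Rmin_glb_lt; auto).
  assert (B1 : forall w, pl_ball q rho w -> pl_ball q r w)
    by (intros; eapply ball_mono; eauto; apply Rmin_l).
  assert (B2 : forall w, pl_ball q rho w -> pl_interior Om w)
    by (intros; apply Hint; eapply ball_mono; eauto; apply Rmin_r).
  assert (Hh : forall w, pl_ball q rho w -> h w = aff a b c w)
    by (intros w Hw; apply (Hs w (B1 w Hw)), interior_in, B2, Hw).
  assert (Hmono : forall w, aff v (IZR i) (IZR j) w = aff a b c w).
  { apply (affine_touching_eq q rho); auto.
    - intros w Hw. rewrite <- (Hh w Hw). eapply Rle_trans; [apply Hhg | apply Hgle]; auto.
    - rewrite <- Hgq, <- (Hh q (ball_center q rho Hrho)). auto. }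
  exists rho, a, b, c. split; auto. intros w Hw _.
  pose proof (Hhg w (B2 w Hw)). pose proof (Hgle w (B2 w Hw)).
  pose proof (Hmono w). pose proof (Hh w Hw).
  change (g w = aff a b c w). lra.
Qed.

(** The competitors in the definition of [G_P 0]: tropical series, nonnegative, whose
    curve passes through every point of [P]. *)
Definition feasible (Om : pset) (P : list pt) (g : pt -> R) : Prop :=
  is_tropical_series Om g /\ (forall q, Om q -> zero_fun q <= g q) /\
  (forall q, In q P -> trop_curve Om g q).

Lemma feasible_min (Om : pset) P g1 g2 : feasible Om P g1 -> feasible Om P g2 ->
  feasible Om P (fun x => Rmin (g1 x) (g2 x)).
Proof.
  intros [T1 [P1 C1]] [T2 [P2 C2]].
  pose proof T1 as [N1 [Z1 F1]]. pose proof T2 as [N2 [Z2 F2]].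
  split; [split; [|split]|split].
  - intros p Hp. apply Rmin_glb; auto.
  - intros p Hp. rewrite Z1, Z2; auto. apply Rmin_left; lra.
  - apply formula_min; auto.
  - intros q Hq. unfold zero_fun. apply Rmin_glb; [apply P1 | apply P2]; auto.
  - intros q Hq. destruct (C1 q Hq) as [Iq Ns1]. destruct (C2 q Hq) as [_ Ns2].
    split; auto. intros Hs.
    destruct (Rle_dec (g1 q) (g2 q)) as [Hle|Hgt].
    + apply Ns1. apply (smooth_transfer Om g1 (fun x => Rmin (g1 x) (g2 x)) q T1 Iq); auto.
      * intros; apply Rmin_l.
      * apply Rmin_left; auto.
    + apply Ns2. apply (smooth_transfer Om g2 (fun x => Rmin (g1 x) (g2 x)) q T2 Iq); auto.
      * intros; apply Rmin_r.
      * apply Rmin_right; lra.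
Qed.

Definition cap (Om : pset) (G M : pt -> R) : pt -> R :=
  fun x => if excluded_middle_informative (pl_interior Om x) then Rmin (G x) (M x) else 0.

Lemma cap_interior (Om : pset) G M x : pl_interior Om x -> cap Om G M x = Rmin (G x) (M x).
Proof. intros Hx. unfold cap. destruct (excluded_middle_informative _); tauto. Qed.

Lemma cap_exterior (Om : pset) G M x : ~ pl_interior Om x -> cap Om G M x = 0.
Proof. intros Hx. unfold cap. destruct (excluded_middle_informative _); tauto. Qed.

Lemma feasible_cap (Om : pset) P G v i j : feasible Om P G ->
  (forall x, Om x -> 0 <= aff v (IZR i) (IZR j) x) ->
  (forall q, In q P -> G q <= aff v (IZR i) (IZR j) q) ->
  feasible Om P (cap Om G (aff v (IZR i) (IZR j))).
Proof.
  intros [TG [PG CG]] Hm HGP.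
  pose proof TG as [NG [_ FG]].
  assert (Hnn : forall x, Om x -> 0 <= cap Om G (aff v (IZR i) (IZR j)) x).
  { intros x Hx. destruct (classic (pl_interior Om x)) as [Ix|Nx].
    - rewrite cap_interior by auto. apply Rmin_glb; auto.
    - rewrite cap_exterior by auto. lra. }
  split; [split; [|split]|split].
  - exact Hnn.
  - intros p [_ Np]. apply cap_exterior; auto.
  - apply (formula_ext Om (fun x => Rmin (G x) (aff v (IZR i) (IZR j) x))).
    + intros p Hp. rewrite cap_interior; auto.
    + apply formula_min; [exact FG | apply formula_monomial].
  - exact Hnn.
  - intros q Hq. destruct (CG q Hq) as [Iq NsG]. split; auto. intros Hs.
    apply NsG, (smooth_transfer Om G (cap Om G (aff v (IZR i) (IZR j))) q TG Iq); auto.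
    + intros w Hw. rewrite cap_interior by auto. apply Rmin_l.
    + rewrite cap_interior by auto. apply Rmin_left, HGP, Hq.
Qed.

(** * Cones over a disc *)

Definition off_curve (Om : pset) (f : pt -> R) : pset :=
  fun p => pl_interior Om p /\ ~ trop_curve Om f p.

Definition cone (x0 : pt) (r0 : R) (q : pt) : pset :=
  fun z => exists k t, pl_ball x0 r0 k /\ 0 <= t < 1 /\ z = comb k q t.

Lemma cone_base x0 r0 q : 0 < r0 -> cone x0 r0 q x0.
Proof. intros Hr0. exists x0, 0. rewrite comb0. repeat split; try lra. apply ball_center; auto. Qed.

Lemma cone_open x0 r0 q z : 0 < r0 -> cone x0 r0 q z ->
  exists rho, 0 < rho /\ forall w, pl_ball z rho w -> cone x0 r0 q w.
Proof.
  intros Hr0 [k [t [Hk [Ht ->]]]].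
  destruct (ball_open x0 r0 k Hr0 Hk) as [rho [Hrho Hsub]].
  exists ((1 - t) * rho); split; [nra|].
  intros w Hw. destruct (comb_ball_preimage k q t rho w Ht Hrho Hw) as [k' [Hk' ->]].
  exists k', t; auto.
Qed.

(** Every point of the cone is joined to the centre [x0] by two segments inside the cone. *)
Lemma cone_connected x0 r0 q : 0 < r0 -> pl_connected (cone x0 r0 q).
Proof.
  intros Hr0. apply star_connected with x0; [apply cone_base; auto|].
  intros z [k [t [Hk [Ht ->]]]].
  exists (fun w => seg x0 k w \/ seg k (comb k q t) w). split; [|split; [|split]].
  - apply union_connected with k; try apply seg_connected.
    + exists 1. rewrite comb1. split; auto; lra.
    + exists 0. rewrite comb0. split; auto; lra.
  - intros w [Hw|[s [Hs ->]]].
    + exists w, 0. rewrite comb0. repeat split; try lra. apply (seg_in_ball x0 r0 k); auto.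
    + exists k, (s * t). rewrite comb_comb. repeat split; auto; nra.
  - left. exists 0. rewrite comb0. split; auto; lra.
  - right. exists 1. rewrite comb1. split; auto; lra.
Qed.

Lemma cone_apex_closure x0 r0 q (S : pset) : 0 < r0 ->
  (forall z, cone x0 r0 q z -> S z) -> pl_closure S q.
Proof.
  intros Hr0 HS r Hr.
  set (D := (fst x0 - fst q) ^ 2 + (snd x0 - snd q) ^ 2).
  assert (HD : 0 <= D)
    by (unfold D; pose proof (pow2_ge_0 (fst x0 - fst q)); pose proof (pow2_ge_0 (snd x0 - snd q)); lra).
  set (u := r / (r + 1 + D)).
  assert (Hu : u * (r + 1 + D) = r) by (unfold u; field; lra).
  assert (Hu0 : 0 < u) by (unfold u; apply Rdiv_lt_0_compat; lra).
  exists (comb x0 q (1 - u)). split.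
  - unfold pl_ball, comb; cbn [fst snd].
    replace ((1 - (1 - u)) * fst x0 + (1 - u) * fst q - fst q) with (u * (fst x0 - fst q)) by ring.
    replace ((1 - (1 - u)) * snd x0 + (1 - u) * snd q - snd q) with (u * (snd x0 - snd q)) by ring.
    replace ((u * (fst x0 - fst q)) ^ 2 + (u * (snd x0 - snd q)) ^ 2) with (u * (u * D))
      by (unfold D; ring).
    nra.
  - apply HS. exists x0, (1 - u). split; [apply ball_center; auto | split; [nra | auto]].
Qed.

(** Suppose [f] lies below an affine function [m] on the interior
    of the convex set [Om] and agrees with it on a disc [B(x0, r0)] of interior points.  If
    moreover [m <= f] on the cone from that disc to a point [q] of [Om], then [f = m] on the
    whole cone, which is an open connected subset of the complement of the curve; hence
    [q] is in the closure of the component of [x0]. *)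
Lemma cone_in_closure (Om : pset) (f : pt -> R) x0 r0 a b c q :
  convex Om -> 0 < r0 -> (forall k, pl_ball x0 r0 k -> pl_interior Om k) ->
  (forall x, pl_interior Om x -> f x <= aff a b c x) -> Om q ->
  (forall k t, pl_ball x0 r0 k -> 0 <= t < 1 -> aff a b c (comb k q t) <= f (comb k q t)) ->
  pl_closure (pl_component (off_curve Om f) x0) q.
Proof.
  intros Hconv Hr0 Hball Hle Hq Hge.
  assert (Hint : forall z, cone x0 r0 q z -> pl_interior Om z)
    by (intros z [k [t [Hk [Ht ->]]]]; apply comb_interior; auto).
  assert (Heq : forall z, cone x0 r0 q z -> f z = aff a b c z).
  { intros z Hz. pose proof (Hle z (Hint z Hz)).
    destruct Hz as [k [t [Hk [Ht ->]]]]. pose proof (Hge k t Hk Ht). lra. }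
  assert (Hoff : forall z, cone x0 r0 q z -> off_curve Om f z).
  { intros z Hz. split; [apply Hint; auto|]. intros [_ Hns]. apply Hns.
    destruct (cone_open x0 r0 q z Hr0 Hz) as [rho [Hrho Hsub]].
    exists rho, a, b, c. split; [exact Hrho|]. intros w Hw _. apply Heq, Hsub, Hw. }
  apply (cone_apex_closure x0 r0 q _ Hr0). intros z Hz.
  exists (cone x0 r0 q).
  split; [apply cone_connected; auto|]. split; [exact Hoff|].
  split; [apply cone_base; auto | exact Hz].
Qed.

(** * The function [G_P 0] *)

(** A real [z] bounded below by [(1 - u) M] for all [u] in [(t, 1)] is bounded below
    by [(1 - t) M]; used to approach the apex of a cone lying on the boundary. *)
Lemma le_from_above t M z : 0 <= M -> t < 1 ->
  (forall u, t < u < 1 -> (1 - u) * M <= z) -> (1 - t) * M <= z.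
Proof.
  intros HM Ht H. apply Rnot_lt_le. intros Hlt.
  set (d := (1 - t) * M - z).
  assert (Hd : 0 < d) by (unfold d; lra).
  assert (He0 : 0 < Rmin ((1 - t) / 2) (d / (2 * (M + 1))))
    by (apply Rmin_glb_lt; [lra | apply Rdiv_lt_0_compat; lra]).
  pose proof (Rmin_l ((1 - t) / 2) (d / (2 * (M + 1)))) as He1.
  pose proof (Rmin_r ((1 - t) / 2) (d / (2 * (M + 1)))) as He2.
  set (e := Rmin ((1 - t) / 2) (d / (2 * (M + 1)))) in *.
  assert (He3 : e * (2 * (M + 1)) <= d).
  { apply (Rmult_le_compat_r (2 * (M + 1))) in He2; [|lra].
    replace (d / (2 * (M + 1)) * (2 * (M + 1))) with d in He2 by (field; lra). lra. }
  pose proof (H (t + e) ltac:(lra)).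
  unfold d in *. nra.
Qed.

Section GPZero.

Variable Omega : pset.
Variable P : list pt.
Variable f : pt -> R.
Hypothesis Hconv : convex Omega.
Hypothesis HGP : is_GP Omega P zero_fun f.

Lemma GP_attained p : Omega p -> exists g, feasible Omega P g /\ g p = f p.
Proof.
  intros Hp. destruct (HGP p Hp) as [[g [Tg [Zg [Cg Eg]]]] _].
  exists g. split; [split; [exact Tg | split; assumption] | exact Eg].
Qed.

Lemma GP_minimal p g : Omega p -> feasible Omega P g -> f p <= g p.
Proof. intros Hp [Tg [Zg Cg]]. destruct (HGP p Hp) as [_ H]. apply H; auto. Qed.

Lemma GP_nonneg p : Omega p -> 0 <= f p.
Proof.
  intros Hp. destruct (GP_attained p Hp) as [g [[_ [Zg _]] Eg]].
  rewrite <- Eg. apply Zg; auto.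
Qed.

(** [f] is concave on the interior: at each point it agrees with a competitor, whose
    active monomial there is an affine function lying above [f]. *)
Lemma GP_concave x y t : pl_interior Omega x -> pl_interior Omega y -> 0 <= t <= 1 ->
  (1 - t) * f x + t * f y <= f (comb x y t).
Proof.
  intros Ix Iy Ht.
  assert (Iz : pl_interior Omega (comb x y t)).
  { destruct (Rlt_or_le t 1).
    - apply comb_interior; auto. apply interior_in; auto. lra.
    - replace t with 1 by lra. rewrite comb1; auto. }
  destruct (GP_attained _ (interior_in _ _ Iz)) as [g [Fg Eg]].
  pose proof Fg as [[_ [_ Hg]] _].
  destruct (formula_touching_monomial _ _ _ Hg Iz) as [v [i [j [Hgz Hgle]]]].
  assert (Hx : f x <= aff v (IZR i) (IZR j) x)
    by (eapply Rle_trans; [apply (GP_minimal x g) | apply Hgle]; auto; apply interior_in; auto).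
  assert (Hy : f y <= aff v (IZR i) (IZR j) y)
    by (eapply Rle_trans; [apply (GP_minimal y g) | apply Hgle]; auto; apply interior_in; auto).
  rewrite <- Eg, Hgz, aff_comb.
  apply Rplus_le_compat; apply Rmult_le_compat_l; lra.
Qed.

Lemma GP_feasible_below (L : list pt) p0 : Omega p0 -> (forall q, In q L -> Omega q) ->
  exists G, feasible Omega P G /\ forall q, In q L -> G q <= f q.
Proof.
  intros Hp0. induction L as [|q L IH]; intros HL.
  - destruct (GP_attained p0 Hp0) as [g [Fg _]]. exists g. split; auto. intros q [].
  - destruct IH as [G [FG HG]]; [intros q' Hq'; apply HL; right; auto|].
    destruct (GP_attained q (HL q (or_introl eq_refl))) as [g [Fg Eg]].
    exists (fun x => Rmin (g x) (G x)). split; [apply feasible_min; auto|].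
    intros q' [<-|Hq'].
    + rewrite <- Eg. apply Rmin_l.
    + eapply Rle_trans; [apply Rmin_r | apply HG; auto].
Qed.

(** Near a point of the complement of the curve, [f] coincides with a monomial that
    lies above [f] on the whole interior: the active monomial of a competitor touching
    [f] there. *)
Lemma GP_flat_near x0 : pl_interior Omega x0 -> smooth_at Omega f x0 ->
  exists r0 v i j, 0 < r0 /\
    (forall k, pl_ball x0 r0 k -> pl_interior Omega k) /\
    (forall k, pl_ball x0 r0 k -> f k = aff v (IZR i) (IZR j) k) /\
    (forall x, pl_interior Omega x -> f x <= aff v (IZR i) (IZR j) x).
Proof.
  intros Ix0 [r1 [a1 [b1 [c1 [Hr1 Hs1]]]]].
  destruct (GP_attained x0 (interior_in _ _ Ix0)) as [g0 [Fg0 Eg0]].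
  pose proof Fg0 as [[_ [_ Hg0]] _].
  destruct (formula_touching_monomial _ _ _ Hg0 Ix0) as [v [i [j [Hgx0 Hgle]]]].
  assert (Hbelow : forall x, pl_interior Omega x -> f x <= aff v (IZR i) (IZR j) x)
    by (intros x Ix; eapply Rle_trans; [apply (GP_minimal x g0) | apply Hgle];
        auto; apply interior_in; auto).
  destruct (interior_open _ _ Ix0) as [r3 [Hr3 Hint3]].
  set (r0 := Rmin r1 r3).
  assert (Hr0 : 0 < r0) by (apply Rmin_glb_lt; auto).
  assert (Hball : forall k, pl_ball x0 r0 k -> pl_interior Omega k)
    by (intros; apply Hint3; eapply ball_mono; eauto; apply Rmin_r).
  assert (Haff : forall k, pl_ball x0 r0 k -> f k = aff a1 b1 c1 k)
    by (intros k Hk; apply Hs1; [eapply ball_mono; eauto; apply Rmin_l | apply interior_in; auto]).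
  assert (Hmono : forall w, aff v (IZR i) (IZR j) w = aff a1 b1 c1 w).
  { apply (affine_touching_eq x0 r0); auto.
    - intros w Hw. rewrite <- (Haff w Hw). apply Hbelow; auto.
    - rewrite <- Hgx0, Eg0. apply Haff, ball_center; auto. }
  exists r0, v, i, j. repeat split; auto.
  intros k Hk. rewrite Hmono. apply Haff; auto.
Qed.

Section FlatNearBase.

(** Setting: [f] coincides with the affine function [m = aff a b c] on a disc
    [B(x0, r0)] of interior points and lies below it on the interior. *)
Variables (x0 : pt) (r0 a b c : R).
Hypothesis Hr0 : 0 < r0.
Hypothesis Hball : forall k, pl_ball x0 r0 k -> pl_interior Omega k.
Hypothesis Hflat : forall k, pl_ball x0 r0 k -> f k = aff a b c k.
Hypothesis Hbelow : forall x, pl_interior Omega x -> f x <= aff a b c x.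

(** An interior point where [m <= f] is in the closure of the component of [x0]:
    by concavity [m <= f] on the whole cone from the disc to that point. *)
Lemma interior_point_in_closure q : pl_interior Omega q -> aff a b c q <= f q ->
  pl_closure (pl_component (off_curve Omega f) x0) q.
Proof.
  intros Iq Hq.
  apply (cone_in_closure Omega f x0 r0 a b c q); auto; [apply interior_in; auto|].
  intros k t Hk Ht. rewrite aff_comb, <- (Hflat k Hk).
  pose proof (GP_concave k q t (Hball k Hk) Iq ltac:(lra)).
  assert (t * aff a b c q <= t * f q) by (apply Rmult_le_compat_l; lra). lra.
Qed.

(** A point of [Omega] where [m <= 0] is in the closure of the component of [x0]: on the
    cone towards it, concavity together with [f >= 0] gives [m <= f]. *)
Lemma nonpositive_point_in_closure y : Omega y -> aff a b c y <= 0 ->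
  pl_closure (pl_component (off_curve Omega f) x0) y.
Proof.
  intros Oy Hy.
  apply (cone_in_closure Omega f x0 r0 a b c y); auto.
  intros k t Hk Ht.
  assert (HM : 0 <= aff a b c k)
    by (rewrite <- (Hflat k Hk); apply GP_nonneg, interior_in, Hball; auto).
  assert (Hcone : forall u, t < u < 1 -> (1 - u) * aff a b c k <= f (comb k y t)).
  { intros u Hu.
    assert (Hus : u * (t / u) = t) by (field; lra).
    assert (Hs : 0 <= t / u < 1) by (split; nra).
    assert (Iw : pl_interior Omega (comb k y (t / u))) by (apply comb_interior; auto).
    replace (comb k y t) with (comb k (comb k y (t / u)) u)
      by (rewrite comb_comb, Hus; reflexivity).
    pose proof (GP_concave k _ u (Hball k Hk) Iw ltac:(lra)).
    pose proof (GP_nonneg _ (interior_in _ _ Iw)).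
    rewrite (Hflat k Hk) in *. nra. }
  pose proof (le_from_above t _ _ HM ltac:(lra) Hcone).
  rewrite aff_comb.
  assert (t * aff a b c y <= 0) by nra. lra.
Qed.

Lemma monomial_positive : pl_compact Omega ->
  (forall q, pl_closure (pl_component (off_curve Omega f) x0) q -> ~ pl_boundary Omega q) ->
  exists eps, 0 < eps /\ forall x, Omega x -> eps <= aff a b c x.
Proof.
  intros Hcomp Hnobd.
  assert (Hbd : forall y, Omega y -> ~ pl_interior Omega y -> 0 < aff a b c y).
  { intros y Oy Ny. apply Rnot_le_lt. intros Hy.
    apply (Hnobd y (nonpositive_point_in_closure y Oy Hy)). split; auto.
    intros r Hr. exists y. split; auto. apply ball_center; auto. }
  apply (compact_pos_lower_bound Omega _ Hcomp (aff_lower_bound_near a b c)).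
  intros x Ox. destruct (classic (pl_interior Omega x)) as [Ix|Nx]; [|apply Hbd; auto].
  (* at an interior [x] with [m x <= 0], [0 <= f <= m] makes [x] a local minimum of
     [m], so [m] is constant, contradicting its positivity at the boundary *)
  apply Rnot_le_lt. intros Hx.
  destruct (interior_open _ _ Ix) as [rx [Hrx Hintx]].
  assert (Hconst : forall w, aff a b c w = aff (aff a b c x) 0 0 w).
  { apply (affine_touching_eq x rx); auto.
    - intros w Hw. pose proof (Hbelow w (Hintx w Hw)).
      pose proof (GP_nonneg w (interior_in _ _ (Hintx w Hw))). unfold aff at 1. lra.
    - unfold aff at 2. ring. }
  destruct (compact_non_interior Omega x Hcomp Ox) as [y [Oy Ny]].
  pose proof (Hbd y Oy Ny) as Hy. rewrite Hconst in Hy. unfold aff at 1 in Hy. lra.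
Qed.

End FlatNearBase.

End GPZero.

Theorem mainTheorem2 (Omega : pset) (P : list pt) (f : pt -> R) :
  pl_compact Omega -> convex Omega -> (exists p, pl_interior Omega p) ->
  (forall p, In p P -> pl_interior Omega p) ->
  is_GP Omega P zero_fun f ->
  forall K : pset,
    is_component (fun p => pl_interior Omega p /\ ~ trop_curve Omega f p) K ->
    (forall q, pl_closure K q -> ~ pl_boundary Omega q) ->
    exists p, In p P /\ pl_closure K p.
Proof.
  intros Hcomp Hconv _ HPint HGP K [x0 [[Ix0 NCx0] HK]] HKbd.
  apply NNPP; intros HnoP.
  assert (HCK : forall q, pl_closure (pl_component (off_curve Omega f) x0) q -> pl_closure K q)
    by (intros q; apply closure_mono; intros y Hy; apply HK, Hy).
  assert (Hsm : smooth_at Omega f x0) by (apply NNPP; intros Hns; apply NCx0; split; auto).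
  destruct (GP_flat_near Omega P f HGP x0 Ix0 Hsm)
    as [r0 [v [i [j [Hr0 [Hball [Hflat Hbelow]]]]]]].
  set (m := aff v (IZR i) (IZR j)) in *.
  destruct (monomial_positive Omega P f Hconv HGP x0 r0 v (IZR i) (IZR j) Hr0 Hball Hflat Hbelow
              Hcomp (fun q Hq => HKbd q (HCK q Hq))) as [eps [Heps Hm]].
  assert (HPm : forall q, In q P -> f q < m q).
  { intros q Hq. apply Rnot_le_lt. intros Hle. apply HnoP. exists q. split; auto.
    apply HCK, (interior_point_in_closure Omega P f Hconv HGP x0 r0 v (IZR i) (IZR j));
      auto. }
  destruct (GP_feasible_below Omega P f HGP P x0 (interior_in _ _ Ix0)
              (fun q Hq => interior_in _ _ (HPint q Hq))) as [G [FG HG]].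
  destruct (list_gap P (fun q => m q - G q) eps Heps) as [e [He [Hee HeP]]].
  { intros q Hq. pose proof (HPm q Hq). pose proof (HG q Hq). lra. }
  (* capping G by m - e gives a competitor that is smaller than f at x0 *)
  assert (Hcap : feasible Omega P (cap Omega G (aff (v - e) (IZR i) (IZR j)))).
  { apply feasible_cap; auto.
    - intros x Hx. pose proof (Hm x Hx). unfold m, aff in *. lra.
    - intros q Hq. pose proof (HeP q Hq). unfold m, aff in *. lra. }
  pose proof (GP_minimal Omega P f HGP x0 _ (interior_in _ _ Ix0) Hcap) as Hmin.
  rewrite cap_interior in Hmin by exact Ix0.
  pose proof (Rmin_r (G x0) (aff (v - e) (IZR i) (IZR j) x0)).
  pose proof (Hflat x0 (ball_center x0 r0 Hr0)).
  unfold m, aff in *. lra.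
Qed.
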